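(* Let $p_0\ge 2$ be a real number, $\theta=\pi/p_0$, let $N$ be an even positive integer, $u\in\mathbb{C}$, $m\in\{0,1,\dots,N/2\}$, and let $\omega_1,\dots,\omega_m$ be a solution of the Bethe ansatz equations $$-\Biggl(\frac{\sinh\frac{\theta}{2}\bigl(\omega_j+i(u+2)\bigr)\sinh\frac{\theta}{2}(\omega_j-iu)}{\sinh\frac{\theta}{2}\bigl(\omega_j-i(u+2)\bigr)\sinh\frac{\theta}{2}(\omega_j+iu)}\Biggr)^{N/2}=\frac{Q(\omega_j+2i)}{Q(\omega_j-2i)},\qquad j=1,\dots,m,$$ where $Q(v)=\prod_{k=1}^m\sinh\frac{\theta}{2}(v-\omega_k)$. For integers $n\ge 0$ define the meromorphic function of $v$ $$T_{n-1}(v)=\sum_{j=1}^{n}\phi\bigl(v-i(u+n+2-2j)\bigr)\,\phi\bigl(v+i(u-n+2j)\bigr)\,\frac{Q(v+in)\,Q(v-in)}{Q\bigl(v+i(2j-n)\bigr)\,Q\bigl(v+i(2j-n-2)\bigr)},\qquad \phi(v)=\Bigl(\frac{\sinh\frac{\theta}{2}v}{\sin\theta}\Bigr)^{N/2}$$ (so $T_{-1}\equiv 0$). Then for all integers $n\ge y\ge 1$ and all $v\in\mathbb{C}$ (as an identity of meromorphic functions) $$T_{n-1}(v+iy)\,T_{n-1}(v-iy)=T_{n+y-1}(v)\,T_{n-y-1}(v)+T_{y-1}(v+in)\,T_{y-1}(v-in).$$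
   Context: These $T_{n-1}(v)$ (with the dependence on $u$ suppressed) are the eigenvalues, in dressed vacuum form, of the fusion hierarchy of quantum transfer matrices of the six-vertex model associated with the spin-$\frac12$ XXZ chain with anisotropy $\Delta=\cos\theta$; here $\sinh$ denotes the hyperbolic sine. *)

From Stdlib Require Import Reals Arith.
From Coquelicot Require Import Coquelicot.
Open Scope R_scope.

Definition Cexp (z : C) : C := (exp (Re z) * cos (Im z), exp (Re z) * sin (Im z)).

Definition Csinh (z : C) : C := ((Cexp z - Cexp (- z)) / 2)%C.

Fixpoint Csum1 (n : nat) (f : nat -> C) : C :=
  match n with O => RtoC 0 | S n' => (Csum1 n' f + f n)%C end.
Fixpoint Cprod1 (m : nat) (f : nat -> C) : C :=
  match m with O => RtoC 1 | S m' => (Cprod1 m' f * f m)%C end.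

Definition Qfun (theta : R) (m : nat) (omega : nat -> C) (v : C) : C :=
  Cprod1 m (fun k => Csinh (RtoC (theta / 2) * (v - omega k))%C).

Definition phifun (theta : R) (N : nat) (v : C) : C :=
  Cpow (Csinh (RtoC (theta / 2) * v)%C / RtoC (sin theta))%C (N / 2).

Definition BAE (theta : R) (N : nat) (u : C) (m : nat) (omega : nat -> C) : Prop :=
  forall j : nat, (1 <= j <= m)%nat ->
    (- Cpow
        ((Csinh (RtoC (theta/2) * (omega j + Ci * (u + 2)))
          * Csinh (RtoC (theta/2) * (omega j - Ci * u)))
         / (Csinh (RtoC (theta/2) * (omega j - Ci * (u + 2)))
          * Csinh (RtoC (theta/2) * (omega j + Ci * u)))) (N / 2))%C
    = (Qfun theta m omega (omega j + 2 * Ci) / Qfun theta m omega (omega j - 2 * Ci))%C.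

(* Tfun n v  is  T_{n-1}(v) (dressed vacuum form); Tfun 0 = T_{-1} = 0. *)
Definition Tfun (theta : R) (N : nat) (u : C) (m : nat) (omega : nat -> C)
    (n : nat) (v : C) : C :=
  let Q := Qfun theta m omega in
  let phi := phifun theta N in
  let nC := RtoC (INR n) in
  Csum1 n (fun j =>
    let jC := RtoC (INR j) in
    (phi (v - Ci * (u + nC + 2 - 2 * jC)) * phi (v + Ci * (u - nC + 2 * jC))
     * (Q (v + Ci * nC) * Q (v - Ci * nC))
     / (Q (v + Ci * (2 * jC - nC)) * Q (v + Ci * (2 * jC - nC - 2))))%C).

Definition Tdefined (theta : R) (m : nat) (omega : nat -> C) (n : nat) (v : C) : Prop :=
  let Q := Qfun theta m omega in
  let nC := RtoC (INR n) in
  forall j : nat, (1 <= j <= n)%nat ->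
    let jC := RtoC (INR j) in
    Q (v + Ci * (2 * jC - nC))%C <> RtoC 0 /\ Q (v + Ci * (2 * jC - nC - 2))%C <> RtoC 0.

(* Write T_{n-1}(v + i s) = Q(v + i(s+n)) Q(v + i(s-n)) * sum_{j=1}^n h(s - n + 2j), where
   h(t) = phi(v + i(t-2) - iu) phi(v + it + iu) / (Q(v + it) Q(v + i(t-2))).  Then each of
   the six factors T in the fusion relation is a product of two values of Q and a sum of h
   over a window of the lattice s - n - y + 2Z.  These windows are unions of three blocks
   D, E, F, and the relation reduces to (D + E)(F + D) = (F + D + E) D + E F. *)
From Stdlib Require Import Reals Arith.
From Coquelicot Require Import Coquelicot.
From Stdlib Require Import Lia.
Open Scope R_scope.

(* [ring] on [C] does not know [Ci * Ci = -1]; compare real and imaginary parts instead. *)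
Ltac C_componentwise := apply injective_projections; simpl; ring.

Lemma Csum1_ext (n : nat) (f g : nat -> C) :
  (forall j, (1 <= j <= n)%nat -> f j = g j) -> Csum1 n f = Csum1 n g.
Proof.
  induction n as [|n IHn]; intros Hfg; simpl; auto.
  rewrite IHn by (intros; apply Hfg; lia). rewrite Hfg by lia. reflexivity.
Qed.

Lemma Csum1_mull (n : nat) (c : C) (f : nat -> C) :
  Csum1 n (fun j => c * f j)%C = (c * Csum1 n f)%C.
Proof. induction n as [|n IHn]; simpl; [ring | rewrite IHn; ring]. Qed.

Section WindowSums.

Variables (Q h : R -> C).

Definition window_sum (a : R) (n : nat) : C := Csum1 n (fun j => h (a + 2 * INR j)).

Definition dressed_sum (n : nat) (s : R) : C :=
  (Q (s + INR n) * Q (s - INR n) * window_sum (s - INR n) n)%C.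

Lemma window_sum_add (a : R) (p q : nat) :
  window_sum a (p + q) = (window_sum a p + window_sum (a + 2 * INR p) q)%C.
Proof.
  unfold window_sum. induction q as [|q IHq].
  - rewrite Nat.add_0_r. simpl. ring.
  - rewrite Nat.add_succ_r. cbn [Csum1]. rewrite IHq.
    replace (a + 2 * INR (S (p + q))) with (a + 2 * INR p + 2 * INR (S q))
      by (rewrite !S_INR, plus_INR; ring).
    ring.
Qed.

Lemma window_sum_eq (a b : R) (n : nat) : a = b -> window_sum a n = window_sum b n.
Proof. intros ->. reflexivity. Qed.

Lemma window_sum_split (a : R) (p q n : nat) :
  (p + q = n)%nat -> window_sum a n = (window_sum a p + window_sum (a + 2 * INR p) q)%C.
Proof. intros <-. apply window_sum_add. Qed.

Lemma dressed_sum_fusion (n y : nat) (s : R) : (y <= n)%nat ->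
  (dressed_sum n (s + INR y) * dressed_sum n (s - INR y))%C =
  (dressed_sum (n + y) s * dressed_sum (n - y) s
   + dressed_sum y (s + INR n) * dressed_sum y (s - INR n))%C.
Proof.
  intros Hyn. unfold dressed_sum.
  rewrite plus_INR, minus_INR by exact Hyn.
  set (x := INR n). set (z := INR y).
  set (D := window_sum (s - x + z) (n - y)).
  set (E := window_sum (s + x - z) y).
  set (F := window_sum (s - x - z) y).
  assert (HDE : window_sum (s + z - x) n = (D + E)%C).
  { rewrite (window_sum_split _ (n - y) y n) by lia. unfold D, E.
    f_equal; apply window_sum_eq; unfold x, z; rewrite ?minus_INR by lia; ring. }
  assert (HFD : window_sum (s - z - x) n = (F + D)%C).
  { rewrite (window_sum_split _ y (n - y) n) by lia. unfold D, F.
    f_equal; apply window_sum_eq; unfold x, z; ring. }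
  assert (HFDE : window_sum (s - (x + z)) (n + y) = (F + D + E)%C).
  { rewrite (window_sum_split _ (y + (n - y)) y (n + y)) by lia.
    rewrite (window_sum_split _ y (n - y) (y + (n - y))) by lia. unfold D, E, F.
    f_equal; [f_equal|]; apply window_sum_eq; unfold x, z;
      rewrite ?plus_INR, ?minus_INR by lia; ring. }
  assert (HD : window_sum (s - (x - z)) (n - y) = D).
  { apply window_sum_eq. ring. }
  rewrite HDE, HFD, HFDE, HD.
  replace (s + x + z) with (s + (x + z)) by ring.
  replace (s + z + x) with (s + (x + z)) by ring.
  replace (s - x - z) with (s - (x + z)) by ring.
  replace (s - z - x) with (s - (x + z)) by ring.
  replace (s + z - x) with (s - (x - z)) by ring.
  replace (s - x + z) with (s - (x - z)) by ring.
  replace (s - z + x) with (s + (x - z)) by ring.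
  replace (s + x - z) with (s + (x - z)) by ring.
  ring.
Qed.

End WindowSums.

Definition Qalong (theta : R) (m : nat) (omega : nat -> C) (v : C) (t : R) : C :=
  Qfun theta m omega (v + Ci * RtoC t)%C.

Definition T_summand (theta : R) (N : nat) (u : C) (m : nat) (omega : nat -> C)
    (v : C) (t : R) : C :=
  (phifun theta N (v + Ci * RtoC (t - 2) - Ci * u) * phifun theta N (v + Ci * RtoC t + Ci * u)
   * / (Qalong theta m omega v t * Qalong theta m omega v (t - 2)))%C.

Lemma Tfun_dressed_sum theta N u m omega v (n : nat) (s : R) :
  Tfun theta N u m omega n (v + Ci * RtoC s)%C =
  dressed_sum (Qalong theta m omega v) (T_summand theta N u m omega v) n s.
Proof.
  unfold Tfun, dressed_sum, window_sum. rewrite <- Csum1_mull. apply Csum1_ext.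
  intros j _. unfold T_summand, Qalong, Cdiv.
  replace (v + Ci * RtoC s - Ci * (u + RtoC (INR n) + 2 - 2 * RtoC (INR j)))%C
    with (v + Ci * RtoC (s - INR n + 2 * INR j - 2) - Ci * u)%C by C_componentwise.
  replace (v + Ci * RtoC s + Ci * (u - RtoC (INR n) + 2 * RtoC (INR j)))%C
    with (v + Ci * RtoC (s - INR n + 2 * INR j) + Ci * u)%C by C_componentwise.
  replace (v + Ci * RtoC s + Ci * RtoC (INR n))%C
    with (v + Ci * RtoC (s + INR n))%C by C_componentwise.
  replace (v + Ci * RtoC s - Ci * RtoC (INR n))%C
    with (v + Ci * RtoC (s - INR n))%C by C_componentwise.
  replace (v + Ci * RtoC s + Ci * (2 * RtoC (INR j) - RtoC (INR n)))%C
    with (v + Ci * RtoC (s - INR n + 2 * INR j))%C by C_componentwise.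
  replace (v + Ci * RtoC s + Ci * (2 * RtoC (INR j) - RtoC (INR n) - 2))%C
    with (v + Ci * RtoC (s - INR n + 2 * INR j - 2))%C by C_componentwise.
  ring.
Qed.

Lemma Tfun_dressed_sum_0 theta N u m omega v (n : nat) :
  Tfun theta N u m omega n v =
  dressed_sum (Qalong theta m omega v) (T_summand theta N u m omega v) n 0.
Proof.
  rewrite <- Tfun_dressed_sum. f_equal. C_componentwise.
Qed.

Theorem mainTheorem1 (p0 : R) (N : nat) (u : C) (m : nat) (omega : nat -> C) :
  2 <= p0 ->
  (0 < N)%nat -> Nat.Even N ->
  (m <= N / 2)%nat ->
  BAE (PI / p0) N u m omega ->
  forall (n y : nat) (v : C),
    (1 <= y)%nat -> (y <= n)%nat ->
    Tdefined (PI / p0) m omega n (v + Ci * RtoC (INR y))%C ->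
    Tdefined (PI / p0) m omega n (v - Ci * RtoC (INR y))%C ->
    Tdefined (PI / p0) m omega (n + y) v ->
    Tdefined (PI / p0) m omega (n - y) v ->
    Tdefined (PI / p0) m omega y (v + Ci * RtoC (INR n))%C ->
    Tdefined (PI / p0) m omega y (v - Ci * RtoC (INR n))%C ->
    (Tfun (PI / p0) N u m omega n (v + Ci * RtoC (INR y))
     * Tfun (PI / p0) N u m omega n (v - Ci * RtoC (INR y)))%C
    = (Tfun (PI / p0) N u m omega (n + y) v * Tfun (PI / p0) N u m omega (n - y) v
       + Tfun (PI / p0) N u m omega y (v + Ci * RtoC (INR n))
         * Tfun (PI / p0) N u m omega y (v - Ci * RtoC (INR n)))%C.
Proof.
  intros _ _ _ _ _ n y v _ Hyn _ _ _ _ _ _.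
  assert (Hminus : forall r, (v - Ci * RtoC r)%C = (v + Ci * RtoC (- r))%C)
    by (intros; C_componentwise).
  rewrite !Hminus, !Tfun_dressed_sum, !Tfun_dressed_sum_0.
  pose proof (dressed_sum_fusion (Qalong (PI / p0) m omega v)
                (T_summand (PI / p0) N u m omega v) n y 0 Hyn) as Hfusion.
  rewrite !Rplus_0_l, !Rminus_0_l in Hfusion.
  exact Hfusion.
Qed.
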